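(* For all integers $r\ge0$ and $\nu\ge0$, $$E^{(2r+1)}_{2\nu}=\frac{1}{(2r)!}\sum_{\rho=0}^{r}(-1)^\rho\,\mathcal G^r_\rho\,E_{2\nu+2\rho}.$$
   Context: Generalised Euler numbers $E^{(m)}_{2\nu}$ are defined by $\operatorname{sech}^m x=\sum_{\nu\ge0}E^{(m)}_{2\nu}\,x^{2\nu}/(2\nu)!$, and $E_{2\nu}=E^{(1)}_{2\nu}$ are the Euler numbers. The integers $\mathcal G^r_\rho$ ($0\le\rho\le r$) are defined by $\mathcal G^0_0=1$, $\mathcal G^r_{-1}=\mathcal G^r_{r+1}=0$, and $\mathcal G^r_\rho=(2r-1)^2\mathcal G^{r-1}_\rho+\mathcal G^{r-1}_{\rho-1}$ for $r\ge1$. *)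

From HB Require Import structures.
From mathcomp Require Import all_boot all_order all_algebra.
Set Implicit Arguments. Unset Strict Implicit. Unset Printing Implicit Defensive.
Import Order.TTheory GRing.Theory Num.Theory.
Local Open Scope ring_scope.

(* A formal power series is given by its coefficient sequence: a n = [x^n] a. *)
Definition ps := nat -> rat.

Definition ps_one : ps := fun n => if n == 0%N then 1 else 0.

Definition ps_mul (a b : ps) : ps :=
  fun n => \sum_(k < n.+1) a k * b (n - k)%N.

Definition ps_exp (a : ps) (m : nat) : ps := iter m (ps_mul a) ps_one.

(* list of the first n+1 coefficients of the multiplicative inverse of a
   (a 0 assumed nonzero): b 0 = (a 0)^-1,
   b n = -(a 0)^-1 * sum_{k=1}^{n} a k * b (n-k). *)
Fixpoint ps_inv_upto (a : ps) (n : nat) : seq rat :=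
  match n with
  | 0%N => [:: (a 0%N)^-1]
  | n'.+1 =>
      let s := ps_inv_upto a n' in
      rcons s (- (a 0%N)^-1 * \sum_(1 <= k < n'.+2) a k * nth 0 s (n'.+1 - k)%N)
  end.

Definition ps_inv (a : ps) : ps := fun n => nth 0 (ps_inv_upto a n) n.

Definition cosh_ps : ps := fun n => if odd n then 0 else (n`!%:R)^-1.

Definition sech_ps : ps := ps_inv cosh_ps.

(* Generalised Euler numbers: sech^m x = sum_k E^(m)_k x^k / k!,
   so E^(m)_k = k! [x^k] sech^m x. (Used with k = 2 nu.) *)
Definition gen_euler (m k : nat) : rat := k`!%:R * ps_exp sech_ps m k.

Definition euler (k : nat) : rat := gen_euler 1 k.

(* The integers G^r_rho: G^0_0 = 1, G^r_{-1} = G^r_{r+1} = 0,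
   G^r_rho = (2r-1)^2 G^{r-1}_rho + G^{r-1}_{rho-1}  (r >= 1). *)
Fixpoint G (r rho : nat) : nat :=
  match r with
  | 0%N => (rho == 0%N)
  | r'.+1 => ((2 * r' + 1) ^ 2 * G r' rho
              + (if rho is rho'.+1 then G r' rho' else 0))%N
  end.

From HB Require Import structures.
From mathcomp Require Import all_boot all_order all_algebra.
From mathcomp Require Import boolp ring zify.
Import Order.TTheory GRing.Theory Num.Theory.
Local Open Scope ring_scope.

(* We work in the commutative ring Q[[x]] of formal power series, realised
   on coefficient sequences nat -> rat with the Cauchy product (associativity
   and commutativity are transported from polynomials by truncation), and
   with the formal derivative D, which satisfies the Leibniz rule.
   With C = cosh, Sh = sinh and S = sech = 1/C we have D C = Sh, D Sh = C,
   C^2 - Sh^2 = 1 and D S = -S^2 Sh; consequently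
       D^2 (S^(m+1)) = (m+1)^2 S^(m+1) - (m+1)(m+2) S^(m+3).
   Reading off the coefficient of x^k gives the recurrence
       E^(m+1)_(k+2) = (m+1)^2 E^(m+1)_k - (m+1)(m+2) E^(m+3)_k,
   while the defining recurrence of G gives the matching recurrence for the
   right-hand sums.  Induction on r then proves the (denominator-free)
   identity (2r)! E^(2r+1)_(2nu) = sum_rho (-1)^rho G^r_rho E_(2nu+2rho). *)

Definition series := ps.
HB.instance Definition _ := gen_eqMixin series.
HB.instance Definition _ := gen_choiceMixin series.

Definition series_add (a b : series) : series := fun n => a n + b n.
Definition series_opp (a : series) : series := fun n => - a n.
Definition series_zero : series := fun _ => 0.

Lemma series_addA : associative series_add.
Proof. by move=> a b c; apply: funext => n; apply: addrA. Qed.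
Lemma series_addC : commutative series_add.
Proof. by move=> a b; apply: funext => n; apply: addrC. Qed.
Lemma series_add0 : left_id series_zero series_add.
Proof. by move=> a; apply: funext => n; apply: add0r. Qed.
Lemma series_addN : left_inverse series_zero series_opp series_add.
Proof. by move=> a; apply: funext => n; apply: addNr. Qed.

HB.instance Definition _ :=
  GRing.isZmodule.Build series series_addA series_addC series_add0 series_addN.

Definition trunc (N : nat) (a : ps) : {poly rat} := \poly_(i < N) a i.

Lemma coefM_low (p p' q q' : {poly rat}) (k : nat) :
  (forall i, (i <= k)%N -> p`_i = p'`_i) ->
  (forall i, (i <= k)%N -> q`_i = q'`_i) ->
  (p * q)`_k = (p' * q')`_k.
Proof.
move=> hp hq; rewrite !coefM; apply: eq_bigr => i _.
by rewrite hp ?hq // ?leq_subr // -ltnS.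
Qed.

Lemma ps_mul_trunc (a b : ps) {k N : nat} :
  (k < N)%N -> ps_mul a b k = (trunc N a * trunc N b)`_k.
Proof.
move=> kN; rewrite coefM /ps_mul; apply: eq_bigr => i _.
have ik : (i <= k)%N by rewrite -ltnS.
by rewrite !coef_poly (leq_ltn_trans ik kN) (leq_ltn_trans (leq_subr i k) kN).
Qed.

Lemma trunc_mul (a b : ps) {k N : nat} :
  (k < N)%N -> (trunc N (ps_mul a b))`_k = (trunc N a * trunc N b)`_k.
Proof. by move=> kN; rewrite coef_poly kN; apply: ps_mul_trunc. Qed.

Lemma ps_mulA : associative ps_mul.
Proof.
move=> a b c; apply: funext => k.
rewrite (ps_mul_trunc (ps_mul a b) c (ltnSn k)) (ps_mul_trunc a (ps_mul b c) (ltnSn k)).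
have lhs : (trunc k.+1 (ps_mul a b) * trunc k.+1 c)`_k
         = (trunc k.+1 a * trunc k.+1 b * trunc k.+1 c)`_k.
  by apply: coefM_low => // i ik; rewrite trunc_mul // ltnS.
have rhs : (trunc k.+1 a * trunc k.+1 (ps_mul b c))`_k
         = (trunc k.+1 a * (trunc k.+1 b * trunc k.+1 c))`_k.
  by apply: coefM_low => // i ik; rewrite trunc_mul // ltnS.
by rewrite lhs rhs mulrA.
Qed.

Lemma ps_mulC : commutative ps_mul.
Proof.
move=> a b; apply: funext => k.
by rewrite (ps_mul_trunc _ _ (ltnSn k)) (ps_mul_trunc b _ (ltnSn k)) mulrC.
Qed.

Lemma ps_mul1 : left_id ps_one ps_mul.
Proof.
move=> a; apply: funext => k.
rewrite /ps_mul big_ord_recl /= mul1r subn0 big1 ?addr0 // => i _.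
by rewrite mul0r.
Qed.

Lemma ps_mulDl : left_distributive ps_mul series_add.
Proof.
move=> a b c; apply: funext => k.
by rewrite /ps_mul /series_add -big_split; apply: eq_bigr => i _; rewrite mulrDl.
Qed.

Lemma ps_one_neq0 : ps_one != (0 : series).
Proof. by apply/eqP => /(congr1 (fun f => f 0%N))/eqP; rewrite oner_eq0. Qed.

HB.instance Definition _ := GRing.Zmodule_isComNzRing.Build series
  ps_mulA ps_mulC ps_mul1 ps_mulDl ps_one_neq0.

Lemma coef_add (a b : series) (k : nat) : (a + b) k = a k + b k.
Proof. by []. Qed.
Lemma coef_sub (a b : series) (k : nat) : (a - b) k = a k - b k.
Proof. by []. Qed.

Lemma coef_mul (a b : series) (k : nat) : (a * b) k = ps_mul a b k.
Proof. by []. Qed.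

Lemma coef_natmul (a : series) (c k : nat) : (a *+ c) k = a k *+ c.
Proof. by elim: c => [|c IH]; rewrite ?mulr0n // !mulrS coef_add IH. Qed.

Lemma coef_natl (a : series) (c k : nat) : ((c%:R : series) * a) k = c%:R * a k.
Proof. by rewrite mulr_natl coef_natmul mulr_natl. Qed.

Lemma ps_exp_expr (a : series) (m : nat) : ps_exp a m = a ^+ m.
Proof. by elim: m => [|m IH] //; rewrite exprS -IH /ps_exp iterS. Qed.

Definition D (a : series) : series := fun n => n.+1%:R * a n.+1.

Lemma D_add (a b : series) : D (a + b) = D a + D b.
Proof. by apply: funext => k; rewrite /D !coef_add mulrDr. Qed.

Lemma D_opp (a : series) : D (- a) = - D a.
Proof. by apply: funext => k; rewrite /D mulrN. Qed.

(* Leibniz rule, transported from the derivative of polynomials. *)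
Lemma D_mul (a b : series) : D (a * b) = D a * b + a * D b.
Proof.
apply: funext => k; rewrite /D coef_add.
rewrite [(a * b) _](ps_mul_trunc _ _ (ltnSn k.+1)).
rewrite [(D a * b) _](ps_mul_trunc _ _ (ltnW (ltnSn k.+1))).
rewrite [(a * D b) _](ps_mul_trunc _ _ (ltnW (ltnSn k.+1))).
rewrite mulr_natl -coef_deriv derivM coefD.
congr (_ + _); apply: coefM_low => // i ik;
  by rewrite coef_deriv !coef_poly /D !ltnS ik (leq_trans ik) // mulr_natl.
Qed.

Lemma D_nat (c : nat) : D c%:R = 0.
Proof.
elim: c => [|c IH]; first by apply: funext => k; rewrite /D mulr0.
rewrite -addn1 natrD D_add IH add0r.
by apply: funext => k; rewrite /D mulr0.
Qed.

Lemma D_natl (c : nat) (a : series) : D (c%:R * a) = c%:R * D a.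
Proof. by rewrite D_mul D_nat mul0r add0r. Qed.

Lemma D_exp (a : series) (m : nat) : D (a ^+ m.+1) = m.+1%:R * a ^+ m * D a.
Proof.
elim: m => [|m IH]; first by rewrite expr1 expr0 mulr1 mul1r.
by rewrite exprS D_mul IH !exprS; ring.
Qed.

(* In characteristic 0 a series with zero derivative is constant. *)
Lemma D_eq0_const1 (f : series) : D f = 0 -> f 0%N = 1 -> f = 1.
Proof.
move=> Df0 f0; apply: funext => -[|k] //.
have /eqP := congr1 (fun g => g k) Df0.
by rewrite /D mulf_eq0 pnatr_eq0 => /eqP.
Qed.

(* ps_inv computes the multiplicative inverse of a series with a unit constant
   term: the recursive formula is the coefficient equation of a * b = 1. *)
Lemma size_ps_inv_upto (a : ps) (n : nat) : size (ps_inv_upto a n) = n.+1.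
Proof. by elim: n => [|n IH] //=; rewrite size_rcons IH. Qed.

Lemma nth_ps_inv_upto (a : ps) (n i : nat) :
  (i <= n)%N -> nth 0 (ps_inv_upto a n) i = ps_inv a i.
Proof.
elim: n i => [|n IH] i; first by rewrite leqn0 => /eqP ->.
rewrite leq_eqVlt => /orP [/eqP -> // | lt_in].
by rewrite /= nth_rcons size_ps_inv_upto lt_in IH // -ltnS.
Qed.

Lemma ps_invS (a : ps) (n : nat) :
  ps_inv a n.+1 = - (a 0%N)^-1 * \sum_(1 <= k < n.+2) a k * ps_inv a (n.+1 - k)%N.
Proof.
rewrite {1}/ps_inv /= nth_rcons size_ps_inv_upto ltnn eqxx; congr (_ * _).
by apply: eq_big_nat => k /andP [k1 kn]; rewrite nth_ps_inv_upto //; lia.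
Qed.

Lemma ps_mul_inv (a : ps) : a 0%N != 0 -> ps_mul a (ps_inv a) = ps_one.
Proof.
move=> a0; apply: funext => -[|n]; first by rewrite /ps_mul big_ord1 /ps_inv /= mulfV.
rewrite /ps_mul big_ord_recl subn0 ps_invS big_add1 /= big_mkord.
by rewrite mulrA mulrN mulfV // mulN1r addNr.
Qed.

Definition C : series := cosh_ps.
Definition Sh : series := fun n => if odd n then (n`!%:R)^-1 else 0.
Definition S : series := sech_ps.

Lemma natS_inv_fact (k : nat) : k.+1%:R * (k.+1`!%:R)^-1 = (k`!%:R)^-1 :> rat.
Proof. by rewrite factS natrM invfM mulrA mulfV ?mul1r // pnatr_eq0. Qed.

Lemma D_cosh : D C = Sh.
Proof.
apply: funext => k; rewrite /D /C /Sh /cosh_ps /=.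
by case: (odd k); rewrite /= ?mulr0 ?natS_inv_fact.
Qed.

Lemma D_sinh : D Sh = C.
Proof.
apply: funext => k; rewrite /D /C /Sh /cosh_ps /=.
by case: (odd k); rewrite /= ?mulr0 ?natS_inv_fact.
Qed.

(* cosh^2 - sinh^2 = 1: the derivative vanishes and the constant term is 1. *)
Lemma cosh2_sub_sinh2 : C * C - Sh * Sh = 1.
Proof.
apply: D_eq0_const1; first by rewrite D_add D_opp !D_mul D_cosh D_sinh; ring.
by rewrite coef_sub !coef_mul /ps_mul !big_ord1 /C /Sh /cosh_ps /= invr1 !mulr1 subr0.
Qed.

Lemma sech_cosh : S * C = 1.
Proof. by rewrite mulrC; apply: ps_mul_inv; rewrite /C /cosh_ps. Qed.

Lemma D_sech : D S = - (S * S * Sh).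
Proof.
have DSC : D S * C + S * Sh = 0 by rewrite -D_cosh -D_mul sech_cosh (D_nat 1).
have -> : D S = S * (D S * C + S * Sh) - S * S * Sh.
  have -> : S * (D S * C + S * Sh) = D S * (S * C) + S * S * Sh by ring.
  by rewrite sech_cosh; ring.
by rewrite DSC; ring.
Qed.

Lemma D2_sech_exp (n : nat) :
  D (D (S ^+ n.+1)) = (n.+1 * n.+1)%:R * S ^+ n.+1 - (n.+1 * n.+2)%:R * S ^+ n.+3.
Proof.
have sinh2 : Sh * Sh = C * C - 1 by rewrite -cosh2_sub_sinh2; ring.
have DSn : D (S ^+ n.+1) = - (n.+1%:R * (S ^+ n.+2 * Sh)).
  by rewrite D_exp D_sech !exprS; ring.
rewrite DSn D_opp D_natl D_mul D_exp D_sech D_sinh !exprS.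
set X := S ^+ n.
transitivity (n.+1%:R * (n.+2%:R * (S * S * S * X) * (Sh * Sh) - S * X * (S * C))
  : series); first by ring.
rewrite sinh2.
transitivity (n.+1%:R * (n.+2%:R * (S * X * (S * C) * (S * C) - S * S * S * X)
  - S * X * (S * C)) : series); first by ring.
by rewrite sech_cosh !natrM -[n.+2]addn1 natrD; ring.
Qed.

(* The coefficient of x^k in this equation: a three-term recurrence. *)
Lemma gen_euler_rec (m k : nat) :
  gen_euler m.+1 k.+2 =
  (m.+1 * m.+1)%:R * gen_euler m.+1 k - (m.+1 * m.+2)%:R * gen_euler m.+3 k.
Proof.
rewrite /gen_euler !ps_exp_expr -/S.
have := congr1 (fun f : series => f k) (D2_sech_exp m).
rewrite /= coef_sub !coef_natl /D => coef_k.
rewrite !factS !natrM.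
transitivity (k`!%:R * (k.+1%:R * (k.+2%:R * (S ^+ m.+1) k.+2))); first ring.
by rewrite coef_k; ring.
Qed.

(* G^r_rho vanishes beyond rho = r, so the top term of the sum for r+1 drops. *)
Lemma G_gt (r rho : nat) : (r < rho)%N -> G r rho = 0%N.
Proof. by elim: r rho => [|r IH] [|rho] //= lt_r; rewrite !IH //; lia. Qed.

Definition euler_sum (r nu : nat) : rat :=
  \sum_(rho < r.+1) (-1) ^+ rho * (G r rho)%:R * euler (2 * nu + 2 * rho).

(* The recurrence defining G translates into a recurrence for euler_sum. *)
Lemma euler_sumS (r nu : nat) :
  euler_sum r.+1 nu = ((2 * r + 1) ^ 2)%:R * euler_sum r nu - euler_sum r nu.+1.
Proof.
rewrite /euler_sum /=.
under eq_bigr => rho _ do rewrite natrD natrM mulrDr mulrDl.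
rewrite big_split /= big_ord_recr /= G_gt // !mulr0 mul0r addr0 mulr_sumr.
congr (_ + _); first by apply: eq_bigr => i _; ring.
rewrite big_ord_recl /= mulr0 mul0r add0r -sumrN.
apply: eq_bigr => i _; rewrite exprS.
have -> : (2 * nu + 2 * bump 0 i)%N = (2 * nu.+1 + 2 * i)%N by rewrite /bump /=; lia.
by ring.
Qed.

Lemma fact_mul_gen_euler (r nu : nat) :
  (2 * r)`!%:R * gen_euler (2 * r + 1) (2 * nu) = euler_sum r nu.
Proof.
elim: r nu => [|r IH] nu.
  by rewrite /euler_sum big_ord1 /= !mul1r muln0 addn0.
rewrite euler_sumS -!IH.
have -> : (2 * r.+1 + 1 = (2 * r).+3)%N by lia.
have -> : (2 * r + 1 = (2 * r).+1)%N by lia.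
have -> : (2 * r.+1 = (2 * r).+2)%N by lia.
have -> : (2 * nu.+1 = (2 * nu).+2)%N by lia.
rewrite gen_euler_rec !factS !natrM.
have -> : (2 * r).+1%:R = (2 * r)%:R + 1 :> rat by rewrite -addn1 natrD.
have -> : (2 * r).+2%:R = (2 * r)%:R + 2%:R :> rat by rewrite -addn2 natrD.
by ring.
Qed.

Theorem mainTheorem4 (r nu : nat) :
  gen_euler (2 * r + 1) (2 * nu) =
  ((2 * r)`!%:R)^-1 *
    \sum_(rho < r.+1) (-1) ^+ rho * (G r rho)%:R * euler (2 * nu + 2 * rho).
Proof.
rewrite -/(euler_sum r nu) -fact_mul_gen_euler mulrA mulVf ?mul1r //.
by rewrite pnatr_eq0 -lt0n fact_gt0.
Qed.
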